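(* Let $(\mathcal B,<)$ be a monoidal poset, $B\in\mathcal B$ and $i,j$ nodes. Then: (i) if $i\not\sim j$ and $r_ir_jB<r_iB<B$, then $r_ir_jB<r_jB<B$; (ii) if $i\not\sim j$, $B<r_iB$, $B<r_jB$ and $r_iB\ne r_jB$, then $r_ir_jB>r_iB$ and $r_ir_jB>r_jB$; (iii) if $i\sim j$, $B<r_iB$ and $B<r_jB$, then $r_iB<r_jr_iB<r_ir_jr_iB$ and $r_jB<r_ir_jB<r_jr_ir_jB$; (iv) if $i\sim j$ and $r_jr_ir_jB<r_jr_iB<r_iB<B$, then $r_jr_ir_jB<r_ir_jB<r_jB<B$; (v) if $\alpha_i\notin B^\perp\cup B$, then either $r_iB<B$ or $r_iB>B$.
   Context: Setting: $M$ is a spherical simply laced Coxeter diagram with nodes $1,\dots,n$ ($i\sim j$: distinct adjacent nodes; $i\not\sim j$ otherwise); $W$ its Weyl group with positive roots $\Phi^+$, fundamental roots $\alpha_i$, reflections $r_i$, inner product with $(\alpha_i,\alpha_i)=2$, $(\alpha_i,\alpha_j)=-1$ if $i\sim j$, $0$ otherwise; height $\mathrm{ht}(\sum a_k\alpha_k)=\sum a_k$. For a set $B$ of mutually orthogonal positive roots, $wB=\Phi^+\cap\{\pm w\beta:\beta\in B\}$, and $B^\perp$ is the set of roots orthogonal to all elements of $B$. A $W$-orbit $\mathcal B$ of such sets is admissible if for every $B\in\mathcal B$, all nodes $i\not\sim j$ and root $\gamma$ with $\gamma,\gamma-\alpha_i+\alpha_j\in B$, $r_iB=r_jB$. For $B,C\in\mathcal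 B$ write $B\prec C$ if $B\ne C$ and the minimal height of an element of $B\setminus C$ is strictly smaller than the minimal height of an element of $C\setminus B$. For admissible $\mathcal B$, the monoidal poset $(\mathcal B,<)$ is $\mathcal B$ with the partial order $<$ given by the transitive closure of $\{(B,r_jB): B\in\mathcal B,\ j\text{ a node},\ B\prec r_jB\}$; $>$ is the reverse relation. *)

From HB Require Import structures.
From mathcomp Require Import all_boot all_order all_algebra finmap.
From Stdlib Require Export Relation_Operators.
Set Implicit Arguments. Unset Strict Implicit. Unset Printing Implicit Defensive.
Import Order.TTheory GRing.Theory Num.Theory.
Local Open Scope fset_scope.
Local Open Scope ring_scope.

(* Vectors in the root lattice, written in the basis of fundamental roots
   alpha_0, ..., alpha_{n-1} (nodes are 'I_n). *)
Notation vec n := {ffun 'I_n -> int}.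

Definition coxeter_diagram n (adj : rel 'I_n) : Prop :=
  symmetric adj /\ irreflexive adj.

Definition cartan n (adj : rel 'I_n) (i j : 'I_n) : int :=
  if i == j then 2 else if adj i j then -1 else 0.

Definition ip n (adj : rel 'I_n) (u v : vec n) : int :=
  \sum_(i < n) \sum_(j < n) u i * v j * cartan adj i j.

Definition alpha n (i : 'I_n) : vec n := [ffun k => (k == i)%:R].

Definition refl n (adj : rel 'I_n) (i : 'I_n) (v : vec n) : vec n :=
  [ffun k => v k - ip adj v (alpha i) * alpha i k].

(* a word w = [:: i1; ...; ik] denotes r_i1 ... r_ik in W *)
Definition act n (adj : rel 'I_n) (w : seq 'I_n) (v : vec n) : vec n :=
  foldr (refl adj) v w.

(* W is finite: only finitely many distinct elements (as linear maps) *)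
Definition spherical n (adj : rel 'I_n) : Prop :=
  exists s : seq (seq 'I_n), forall w : seq 'I_n,
    exists2 w', w' \in s & forall v, act adj w v = act adj w' v.

Definition is_root n (adj : rel 'I_n) (v : vec n) : Prop :=
  exists (w : seq 'I_n) (i : 'I_n), v = act adj w (alpha i).

Definition nonneg_vec n (v : vec n) : bool := [forall k, 0 <= v k].

Definition is_pos_root n (adj : rel 'I_n) (v : vec n) : Prop :=
  is_root adj v /\ nonneg_vec v.

(* wB = Phi^+ cap {+- w b : b in B}  (for B a set of roots, the elements of
   {+- w b} are roots, so intersecting with Phi^+ = keeping the nonnegative ones) *)
Definition wset n (adj : rel 'I_n) (w : seq 'I_n) (B : {fset vec n}) : {fset vec n} :=
  [fset v in [fset act adj w b | b in B] `|` [fset [ffun k => - act adj w b k] | b in B]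
     | nonneg_vec v].

Definition orth_pos_set n (adj : rel 'I_n) (B : {fset vec n}) : Prop :=
  (forall b, b \in B -> is_pos_root adj b) /\
  (forall b c, b \in B -> c \in B -> b != c -> ip adj b c = 0).

Definition is_orbit n (adj : rel 'I_n) (Bs : {fset vec n} -> Prop) : Prop :=
  exists2 B0, orth_pos_set adj B0 & forall B, Bs B <-> exists w, B = wset adj w B0.

Definition admissible n (adj : rel 'I_n) (Bs : {fset vec n} -> Prop) : Prop :=
  is_orbit adj Bs /\
  forall B, Bs B -> forall i j : 'I_n, ~~ adj i j ->
    forall g, g \in B -> [ffun k => g k - alpha i k + alpha j k] \in B ->
      wset adj [:: i] B = wset adj [:: j] B.

Definition ht n (v : vec n) : int := \sum_(k < n) v k.

Definition prec n (B C : {fset vec n}) : Prop :=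
  B != C /\ C `\` B != fset0 /\
  exists2 b, b \in B `\` C & forall c, c \in C `\` B -> ht b < ht c.

Definition mstep n (adj : rel 'I_n) (Bs : {fset vec n} -> Prop) (B C : {fset vec n}) : Prop :=
  Bs B /\ exists j : 'I_n, C = wset adj [:: j] B /\ prec B C.

Definition mlt n (adj : rel 'I_n) (Bs : {fset vec n} -> Prop) : {fset vec n} -> {fset vec n} -> Prop :=
  clos_trans _ (mstep adj Bs).

Definition in_perp n (adj : rel 'I_n) (B : {fset vec n}) (v : vec n) : Prop :=
  is_root adj v /\ forall b, b \in B -> ip adj v b = 0.

(* Sphericity makes the form positive definite: averaging the dot product over
   the finite group W gives a W-invariant form Q, and invariance under r_k yields
   2 Q(v, alpha_k) = (v, alpha_k) Q(alpha_k, alpha_k).  Expanding Q(p, p) along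
   the coordinates of a nonzero p >= 0 then produces a k with p_k > 0 and
   (p, alpha_k) > 0, and descending along such simple roots gives (p, p) >= 2.
   Consequently roots are positive or negative, the members of the orbit are sets
   of positive roots of norm 2, and (x, alpha_k) lies in {-1, 0, 1} for x in B
   when alpha_k is not in B.

   A reflection r_k moves exactly the x in B with (x, alpha_k) <> 0, to
   x - (x, alpha_k) alpha_k, so whether r_k B is below or above B is decided by
   the lowest such x, and the two minima can never tie.  The order < is strict
   because B \prec C makes B lexicographically larger in its numbers of roots of
   each height.  Each item then reduces to a finite analysis of the values of
   (x, alpha_i) and (x, alpha_j) at the roots realising these minima: every
   impossible configuration produces a vector of norm 0, or a root of height 0,
   or a simple root with impossible inner products, except one configuration in
   (ii) where two roots of B differ by alpha_i + alpha_j, which admissibility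
   excludes. *)

From HB Require Import structures.
From Pilot Require Import Defs.
From mathcomp Require Import all_boot all_order all_algebra finmap zify ring.
Import Order.TTheory GRing.Theory Num.Theory.
Set Implicit Arguments. Unset Strict Implicit. Unset Printing Implicit Defensive.

Local Open Scope fset_scope.
Local Open Scope ring_scope.

Lemma fset_argmin (T : choiceType) (A : {fset T}) (f : T -> int) x0 : x0 \in A ->
  exists2 x, x \in A & forall y, y \in A -> f x <= f y.
Proof.
move=> x0A.
have [[x xA] _ min_x] := arg_minP (fun y : A => f (val y)) (i0 := [` x0A]) (P := xpredT) isT.
by exists x => // y yA; apply: (min_x [` yA]).
Qed.

Section RootLattice.
Variables (n : nat) (adj : rel 'I_n).
Hypotheses (adj_sym : symmetric adj) (adj_irr : irreflexive adj).

Local Notation vec := {ffun 'I_n -> int}.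
Local Notation cartan := (cartan adj).
Local Notation ip := (ip adj).
Local Notation refl := (refl adj).
Local Notation act := (act adj).

Lemma cartanC i j : cartan i j = cartan j i.
Proof. by rewrite /Defs.cartan eq_sym adj_sym. Qed.

Lemma cartan_id i : cartan i i = 2.
Proof. by rewrite /Defs.cartan eqxx. Qed.

Lemma cartan_neq i j : i != j -> cartan i j = if adj i j then -1 else 0.
Proof. by rewrite /Defs.cartan => /negbTE ->. Qed.

Lemma cartan_adj i j : adj i j -> cartan i j = -1.
Proof. by move=> ij; rewrite cartan_neq ?ij //; apply: contraTneq ij => ->; rewrite adj_irr. Qed.

Lemma cartan_nadj i j : i != j -> ~~ adj i j -> cartan i j = 0.
Proof. by move=> ij /negbTE nij; rewrite cartan_neq ?nij. Qed.

Lemma cartan_le0 i j : i != j -> cartan i j <= 0.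
Proof. by move/cartan_neq->; case: (adj i j). Qed.

Lemma ipC u v : ip u v = ip v u.
Proof.
rewrite /Defs.ip exchange_big; apply: eq_bigr => i _; apply: eq_bigr => j _.
by rewrite cartanC; ring.
Qed.

Lemma ipDl u v w : ip (u + v) w = ip u w + ip v w.
Proof.
rewrite /Defs.ip -big_split; apply: eq_bigr => i _.
by rewrite -big_split; apply: eq_bigr => j _; rewrite ffunE !mulrDl.
Qed.

Lemma ipNl u w : ip (- u) w = - ip u w.
Proof.
rewrite /Defs.ip -sumrN; apply: eq_bigr => i _.
by rewrite -sumrN; apply: eq_bigr => j _; rewrite ffunE !mulNr.
Qed.

Lemma ipMzl u c w : ip (u *~ c) w = ip u w * c.
Proof.
rewrite /Defs.ip mulr_suml; apply: eq_bigr => i _.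
by rewrite mulr_suml; apply: eq_bigr => j _; rewrite ffunMzE mulrzz; ring.
Qed.

Lemma ipBl u v w : ip (u - v) w = ip u w - ip v w.
Proof. by rewrite ipDl ipNl. Qed.

Lemma ipDr u v w : ip w (u + v) = ip w u + ip w v.
Proof. by rewrite ipC ipDl !(ipC w). Qed.

Lemma ipNr u w : ip w (- u) = - ip w u.
Proof. by rewrite ipC ipNl ipC. Qed.

Lemma ipBr u v w : ip w (u - v) = ip w u - ip w v.
Proof. by rewrite ipDr ipNr. Qed.

Lemma ipMzr u c w : ip w (u *~ c) = ip w u * c.
Proof. by rewrite ipC ipMzl ipC. Qed.

Lemma ip0l w : ip 0 w = 0.
Proof. by rewrite -(subrr 0) ipBl subrr. Qed.

Lemma ip_alphar u k : ip u (alpha k) = \sum_(i < n) u i * cartan i k.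
Proof.
rewrite /Defs.ip; apply: eq_bigr => i _.
rewrite (bigD1 k) //= big1 => [|j /negbTE jk]; last by rewrite !ffunE jk mulr0 mul0r.
by rewrite !ffunE eqxx mulr1 addr0.
Qed.

Lemma ip_alpha a b : ip (alpha a) (alpha b) = cartan a b.
Proof.
rewrite ip_alphar (bigD1 a) //= big1 => [|j /negbTE ja]; last by rewrite !ffunE ja mul0r.
by rewrite !ffunE eqxx mul1r addr0.
Qed.

Lemma reflE k v : refl k v = v - alpha k *~ ip v (alpha k).
Proof. by apply/ffunP => m; rewrite !(ffunE, ffunMzE) mulrzz mulrC. Qed.

Lemma ip_refll k u w : ip (refl k u) w = ip u w - ip u (alpha k) * ip (alpha k) w.
Proof. by rewrite reflE ipBl ipMzl mulrC. Qed.

Lemma ip_refl k u v : ip (refl k u) (refl k v) = ip u v.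
Proof.
rewrite ip_refll (ipC u) (ipC (alpha k) (refl k v)) !ip_refll ip_alpha cartan_id.
rewrite (ipC (alpha k) u) (ipC v u); ring.
Qed.

Lemma ip_refl_alpha k v : ip (refl k v) (alpha k) = - ip v (alpha k).
Proof. by rewrite ip_refll ip_alpha cartan_id; ring. Qed.

Lemma reflK k : involutive (refl k).
Proof. by move=> v; apply/ffunP => m; rewrite !ffunE ip_refll ip_alpha cartan_id; ring. Qed.

Lemma refl_alpha k : refl k (alpha k) = - alpha k.
Proof. by apply/ffunP => m; rewrite reflE ip_alpha cartan_id !(ffunE, ffunMzE) mulrzz; ring. Qed.

Lemma refl_id k v : ip v (alpha k) = 0 -> refl k v = v.
Proof. by move=> v0; rewrite reflE v0 mulr0z subr0. Qed.

Lemma refl_is_zmod_morphism k : zmod_morphism (refl k).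
Proof. by move=> u v; apply/ffunP => m; rewrite !ffunE ipBl; ring. Qed.

HB.instance Definition _ k :=
  GRing.isZmodMorphism.Build vec vec (refl k) (refl_is_zmod_morphism k).

Lemma act_cat w1 w2 v : act (w1 ++ w2) v = act w1 (act w2 v).
Proof. by rewrite /Defs.act foldr_cat. Qed.

Lemma ip_act w u v : ip (act w u) (act w v) = ip u v.
Proof. by elim: w => //= k w IH; rewrite ip_refl. Qed.

Lemma act_is_zmod_morphism w : zmod_morphism (act w).
Proof. by elim: w => // k w IH u v /=; rewrite IH raddfB. Qed.

HB.instance Definition _ w :=
  GRing.isZmodMorphism.Build vec vec (act w) (act_is_zmod_morphism w).

Lemma htD (u v : vec) : ht (u + v) = ht u + ht v.
Proof. by rewrite /ht -big_split; apply: eq_bigr => i _; rewrite ffunE. Qed.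

Lemma htN (u : vec) : ht (- u) = - ht u.
Proof. by rewrite /ht -sumrN; apply: eq_bigr => i _; rewrite ffunE. Qed.

Lemma htB (u v : vec) : ht (u - v) = ht u - ht v.
Proof. by rewrite htD htN. Qed.

Lemma ht_alpha (k : 'I_n) : ht (alpha k) = 1.
Proof. by rewrite /ht (bigD1 k) //= big1 => [|j /negbTE jk]; rewrite !ffunE ?eqxx ?jk. Qed.

Lemma htMz (u : vec) c : ht (u *~ c) = ht u * c.
Proof. by rewrite /ht mulr_suml; apply: eq_bigr => i _; rewrite ffunMzE mulrzz. Qed.

Lemma ht_refl k v : ht (refl k v) = ht v - ip v (alpha k).
Proof. by rewrite reflE htB htMz ht_alpha mul1r. Qed.

Lemma nonzero_coord (v : vec) : v != 0 -> exists k, v k != 0.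
Proof.
move=> v0; apply/existsP; apply: contraR v0 => /existsPn v_eq0.
by apply/eqP/ffunP => m; rewrite ffunE; apply/eqP/negPn.
Qed.

Lemma vec_decomp (v : vec) : v = \sum_(i < n) alpha i *~ v i.
Proof.
apply/ffunP => m; rewrite sum_ffunE (bigD1 m) //= big1 => [|j /negbTE jm].
  by rewrite ffunMzE ffunE eqxx mulrzz mul1r addr0.
by rewrite ffunMzE ffunE eq_sym jm mul0rz.
Qed.

(** * Positive definiteness *)

Section InvariantForm.
Variable s : seq (seq 'I_n).
Hypothesis s_covers_W : forall w, exists2 w', w' \in s & act w =1 act w'.

Definition mx_of (w : seq 'I_n) : {ffun 'I_n -> vec} := [ffun i => act w (alpha i)].

Definition mx_app (M : {ffun 'I_n -> vec}) (v : vec) : vec := \sum_(i < n) M i *~ v i.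

Lemma act_mx w v : act w v = mx_app (mx_of w) v.
Proof.
by rewrite {1}(vec_decomp v) raddf_sum; apply: eq_bigr => i _; rewrite raddfMz ffunE.
Qed.

Lemma mx_app_is_zmod_morphism M : zmod_morphism (mx_app M).
Proof.
move=> u v; rewrite /mx_app -sumrB; apply: eq_bigr => i _.
by rewrite !ffunE mulrzBr.
Qed.

HB.instance Definition _ M :=
  GRing.isZmodMorphism.Build vec vec (mx_app M) (mx_app_is_zmod_morphism M).

(* An element of W is represented by its matrix [mx_of w], so that [W_mx] lists
   every element of W exactly once. *)
Definition W_mx := undup [seq mx_of w | w <- s].

Lemma mx_of_in w : mx_of w \in W_mx.
Proof.
have [w' w's ww'] := s_covers_W w; rewrite mem_undup.
have -> : mx_of w = mx_of w' by apply/ffunP => i; rewrite !ffunE ww'.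
exact: map_f.
Qed.

Lemma W_mxP M : M \in W_mx -> exists w, M = mx_of w.
Proof. by rewrite mem_undup => /mapP [w _ ->]; exists w. Qed.

Definition dot (u v : vec) : int := \sum_(i < n) u i * v i.

Lemma dot_is_zmod_morphism u : zmod_morphism (dot u).
Proof. by move=> v w; rewrite /dot -sumrB; apply: eq_bigr => i _; rewrite !ffunE mulrBr. Qed.

HB.instance Definition _ u :=
  GRing.isZmodMorphism.Build vec int (dot u) (dot_is_zmod_morphism u).

Definition inv_form (u v : vec) : int :=
  \sum_(M <- W_mx) dot (mx_app M u) (mx_app M v).

Lemma inv_formC u v : inv_form u v = inv_form v u.
Proof. by apply: eq_bigr => M _; apply: eq_bigr => i _; rewrite mulrC. Qed.

Lemma inv_form_is_zmod_morphism u : zmod_morphism (inv_form u).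
Proof.
move=> v w; rewrite /inv_form -sumrB; apply: eq_bigr => M _.
by rewrite !raddfB.
Qed.

HB.instance Definition _ u :=
  GRing.isZmodMorphism.Build vec int (inv_form u) (inv_form_is_zmod_morphism u).

Lemma dot_gt0 u : u != 0 -> 0 < dot u u.
Proof.
move=> /nonzero_coord [m um].
rewrite /dot (bigD1 m) //= ltr_wpDr // ?sumr_ge0 // => [i _|]; rewrite -expr2 ?sqr_ge0 //.
by rewrite exprn_even_gt0.
Qed.

Lemma inv_form_ge0 u : 0 <= inv_form u u.
Proof. by apply: sumr_ge0 => M _; apply: sumr_ge0 => i _; rewrite -expr2 sqr_ge0. Qed.

Lemma inv_form_gt0 u : u != 0 -> 0 < inv_form u u.
Proof.
move=> u0; rewrite /inv_form (bigD1_seq (mx_of [::])) ?undup_uniq ?mx_of_in //=.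
rewrite -!act_mx ltr_wpDr ?dot_gt0 // sumr_ge0 // => M _.
by apply: sumr_ge0 => i _; rewrite -expr2 sqr_ge0.
Qed.

Section ReflectionInvariance.
Variable k : 'I_n.

Definition mx_refl (M : {ffun 'I_n -> vec}) : {ffun 'I_n -> vec} :=
  [ffun i => mx_app M (refl k (alpha i))].

Lemma mx_refl_mx_of w : mx_refl (mx_of w) = mx_of (w ++ [:: k]).
Proof. by apply/ffunP => i; rewrite !ffunE -act_mx act_cat. Qed.

Lemma mx_reflK M : M \in W_mx -> mx_refl (mx_refl M) = M.
Proof.
move/W_mxP => [w ->]; rewrite !mx_refl_mx_of -catA.
by apply/ffunP => i; rewrite !ffunE act_cat /= reflK.
Qed.

Lemma mx_refl_in M : M \in W_mx -> mx_refl M \in W_mx.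
Proof. by move/W_mxP => [w ->]; rewrite mx_refl_mx_of mx_of_in. Qed.

Lemma mx_app_refl M u : M \in W_mx -> mx_app (mx_refl M) u = mx_app M (refl k u).
Proof. by move/W_mxP => [w ->]; rewrite mx_refl_mx_of -!act_mx act_cat. Qed.

Lemma perm_mx_refl : perm_eq [seq mx_refl M | M <- W_mx] W_mx.
Proof.
apply: uniq_perm; first 2 last.
- move=> M; apply/mapP/idP => [[M' M'in ->]|Min]; first exact: mx_refl_in.
  by exists (mx_refl M); [exact: mx_refl_in | rewrite mx_reflK].
- rewrite map_inj_in_uniq ?undup_uniq // => M1 M2 M1in M2in E.
  by rewrite -(mx_reflK M1in) E mx_reflK.
- exact: undup_uniq.
Qed.

Lemma inv_form_refl u v : inv_form (refl k u) (refl k v) = inv_form u v.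
Proof.
rewrite /inv_form -[RHS](perm_big _ perm_mx_refl) big_map !big_seq.
by apply: eq_bigr => M Min; rewrite !mx_app_refl.
Qed.

Lemma inv_form_alpha v :
  2 * inv_form v (alpha k) = ip v (alpha k) * inv_form (alpha k) (alpha k).
Proof.
have := inv_form_refl v (alpha k).
rewrite refl_alpha raddfN /= [inv_form (refl k v) _]inv_formC reflE raddfB raddfMz /=.
by rewrite mulrzz (inv_formC (alpha k) v); lia.
Qed.

End ReflectionInvariance.

Lemma nonneg_ip_alpha_gt0 p : nonneg_vec p -> p != 0 ->
  exists k, 0 < p k /\ 0 < ip p (alpha k).
Proof.
move=> /forallP p_ge0 p0.
have /existsP [k /andP [pk ek]] : [exists k, (0 < p k) && (0 < ip p (alpha k))].
  apply: contraT => /existsPn p_ip_le0.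
  suff : 2 * inv_form p p <= 0 by have := inv_form_gt0 p0; lia.
  rewrite {2}(vec_decomp p) raddf_sum mulr_sumr; apply: sumr_le0 => k _.
  rewrite raddfMz /= mulrzz mulrA inv_form_alpha.
  have := inv_form_ge0 (alpha k); move: (p_ip_le0 k).
  rewrite negb_and -!leNgt => /orP [pk_le0 ak_ge0|ek_le0 ak_ge0].
    have -> : p k = 0 by apply/eqP; rewrite eq_le pk_le0 p_ge0.
    by rewrite mulr0.
  by rewrite -mulrA mulr_le0_ge0 // mulr_ge0.
by exists k.
Qed.

End InvariantForm.

Hypothesis adj_spherical : spherical adj.

Lemma nonneg_coord_le_ht (p : vec) k : nonneg_vec p -> p k <= ht p.
Proof. by move/forallP => p_ge0; rewrite /ht (bigD1 k) //= lerDl sumr_ge0. Qed.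

Lemma nonneg_ht_gt0 (p : vec) : nonneg_vec p -> p != 0 -> 0 < ht p.
Proof.
move=> p_ge0 /nonzero_coord [k pk]; have := nonneg_coord_le_ht k p_ge0.
by move/forallP: p_ge0 => /(_ k); move: pk; lia.
Qed.

Lemma nonneg_sub_alpha (p : vec) k : nonneg_vec p -> 0 < p k -> nonneg_vec (p - alpha k).
Proof.
move=> /forallP p_ge0 pk; apply/forallP => m; have := p_ge0 m; rewrite !ffunE.
by case: (eqVneq m k) => [->|_] /=; lia.
Qed.

(* Descent along a simple root [alpha k] with [0 < ip p (alpha k)] does not
   increase the norm, and ends at a simple root, of norm 2. *)
Lemma nonneg_ip_ge2 (p : vec) : nonneg_vec p -> p != 0 -> 2 <= ip p p.
Proof.
have [s sW] := adj_spherical.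
have [N] : exists N : nat, ht p <= N%:Z by exists `|ht p|%N; rewrite abszE ler_norm.
elim: N p => [|N IH] p ht_le p_ge0 p0.
  by have := nonneg_ht_gt0 p_ge0 p0; lia.
have [k [pk ek]] := nonneg_ip_alpha_gt0 sW p_ge0 p0.
have ip_pk : ip (p - alpha k) (p - alpha k) = ip p p - 2 * ip p (alpha k) + 2.
  by rewrite ipBl !ipBr ip_alpha cartan_id (ipC (alpha k)); ring.
have [/eqP|q0] := eqVneq (p - alpha k) 0.
  by rewrite subr_eq0 => /eqP ->; rewrite ip_alpha cartan_id.
have q_ge0 := nonneg_sub_alpha p_ge0 pk.
have ht_q : ht (p - alpha k) <= N%:Z by rewrite htB ht_alpha; lia.
by have := IH _ ht_q q_ge0 q0; lia.
Qed.

Definition vpos (v : vec) : vec := [ffun i => if 0 <= v i then v i else 0].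
Definition vneg (v : vec) : vec := [ffun i => if 0 <= v i then 0 else - v i].

Lemma vpos_nonneg v : nonneg_vec (vpos v).
Proof. by apply/forallP => i; rewrite ffunE; case: (leP 0 (v i)). Qed.

Lemma vneg_nonneg v : nonneg_vec (vneg v).
Proof. by apply/forallP => i; rewrite ffunE; case: (leP 0 (v i)); lia. Qed.

Lemma vpos_sub_vneg v : vpos v - vneg v = v.
Proof.
by apply/ffunP => i; rewrite !ffunE; case: (leP 0 (v i)); rewrite ?subr0 ?sub0r ?opprK.
Qed.

(* The two parts have disjoint supports, and off-diagonal Cartan entries are
   nonpositive. *)
Lemma ip_vpos_vneg_le0 v : ip (vpos v) (vneg v) <= 0.
Proof.
apply: sumr_le0 => i _; apply: sumr_le0 => j _.
have [<-|ij] := eqVneq i j.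
  by rewrite !ffunE; case: (leP 0 (v i)); lia.
have := cartan_le0 ij; move/forallP: (vpos_nonneg v) => /(_ i).
by move/forallP: (vneg_nonneg v) => /(_ j); nia.
Qed.

Lemma ip_vpos_vneg v :
  ip v v = ip (vpos v) (vpos v) + ip (vneg v) (vneg v) - 2 * ip (vpos v) (vneg v).
Proof. by rewrite -{1 2}(vpos_sub_vneg v) ipBl !ipBr (ipC (vneg v)); ring. Qed.

Lemma nonneg_ip_ge0 (p : vec) : nonneg_vec p -> 0 <= ip p p.
Proof. by have [->|/nonneg_ip_ge2 ip2] := eqVneq p 0; [rewrite ip0l | move/ip2; lia]. Qed.

Lemma ip_ge0 (v : vec) : 0 <= ip v v.
Proof.
rewrite ip_vpos_vneg; have := ip_vpos_vneg_le0 v.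
by have := nonneg_ip_ge0 (vpos_nonneg v); have := nonneg_ip_ge0 (vneg_nonneg v); lia.
Qed.

Lemma ip_ge2 (v : vec) : v != 0 -> 2 <= ip v v.
Proof.
move=> v0; rewrite ip_vpos_vneg; have := ip_vpos_vneg_le0 v.
have := nonneg_ip_ge0 (vpos_nonneg v); have := nonneg_ip_ge0 (vneg_nonneg v).
have [p0|/(nonneg_ip_ge2 (vpos_nonneg v))] := eqVneq (vpos v) 0; last by lia.
have [n0|/(nonneg_ip_ge2 (vneg_nonneg v))] := eqVneq (vneg v) 0; last by lia.
by move: v0; rewrite -(vpos_sub_vneg v) p0 n0 subrr eqxx.
Qed.

Lemma ip_eq0 (v : vec) : ip v v = 0 -> v = 0.
Proof. by move=> v0; have [|/ip_ge2] := eqVneq v 0; last lia. Qed.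

Lemma norm2_neq0 (v : vec) : ip v v = 2 -> v != 0.
Proof. by move=> v2; apply: contra_eqN v2 => /eqP ->; rewrite ip0l. Qed.

Lemma norm2_sign (v : vec) : ip v v = 2 -> nonneg_vec v \/ nonneg_vec (- v).
Proof.
move=> v2; have := ip_vpos_vneg v; rewrite v2; have := ip_vpos_vneg_le0 v.
have [p0 _ _|p_neq0] := eqVneq (vpos v) 0.
  by right; rewrite -(vpos_sub_vneg v) p0 sub0r opprK; apply: vneg_nonneg.
have [n0 _ _|n_neq0] := eqVneq (vneg v) 0.
  by left; rewrite -(vpos_sub_vneg v) n0 subr0; apply: vpos_nonneg.
have := nonneg_ip_ge2 (vpos_nonneg v) p_neq0.
have := nonneg_ip_ge2 (vneg_nonneg v) n_neq0; lia.
Qed.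

Lemma nonneg_and_nonpos (v : vec) : nonneg_vec v -> nonneg_vec (- v) -> v = 0.
Proof.
move=> /forallP v_ge0 /forallP v_le0; apply/ffunP => m; have := v_le0 m.
by rewrite !ffunE oppr_ge0 => vm_le0; apply/eqP; rewrite eq_le vm_le0 v_ge0.
Qed.

Lemma norm2_ht_neq0 (v : vec) : ip v v = 2 -> ht v != 0.
Proof.
move=> v2; have v0 := norm2_neq0 v2; case: (norm2_sign v2) => [|/nonneg_ht_gt0].
  by move/nonneg_ht_gt0 => /(_ v0); lia.
by rewrite oppr_eq0 htN => /(_ v0); lia.
Qed.

Lemma norm2_ip_alpha (v : vec) k : ip v v = 2 -> -2 <= ip v (alpha k) <= 2.
Proof.
move=> v2; have := ip_ge0 (v - alpha k); have := ip_ge0 (v + alpha k).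
by rewrite ipBl ipDl !ipBr !ipDr ip_alpha cartan_id (ipC (alpha k)); lia.
Qed.

Lemma norm2_ip_alpha_eq2 (v : vec) k : ip v v = 2 -> ip v (alpha k) = 2 -> v = alpha k.
Proof.
move=> v2 e2; apply/eqP; rewrite -subr_eq0; apply/eqP/ip_eq0.
by rewrite ipBl !ipBr ip_alpha cartan_id (ipC (alpha k)); lia.
Qed.

Lemma norm2_ip_alpha_eqN2 (v : vec) k :
  ip v v = 2 -> ip v (alpha k) = -2 -> v = - alpha k.
Proof.
move=> v2 e2; apply/eqP; rewrite -subr_eq0 opprK; apply/eqP/ip_eq0.
by rewrite ipDl !ipDr ip_alpha cartan_id (ipC (alpha k)); lia.
Qed.

Lemma alpha_nonneg (k : 'I_n) : nonneg_vec (alpha k).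
Proof. by apply/forallP => m; rewrite ffunE; case: (m == k). Qed.

Lemma pos_root_ip_alpha (x : vec) k : nonneg_vec x -> ip x x = 2 -> x != alpha k ->
  -1 <= ip x (alpha k) <= 1.
Proof.
move=> x_ge0 x2 xk; have := norm2_ip_alpha k x2.
have [e2|] := eqVneq (ip x (alpha k)) 2.
  by rewrite (norm2_ip_alpha_eq2 x2 e2) eqxx in xk.
have [eN2|] := eqVneq (ip x (alpha k)) (-2); last by lia.
move/forallP: x_ge0 => /(_ k); rewrite (norm2_ip_alpha_eqN2 x2 eN2) !ffunE eqxx; lia.
Qed.

Lemma norm2_ht1 (v : vec) : ip v v = 2 -> ht v = 1 -> exists k, v = alpha k.
Proof.
move=> v2 ht1; have v_ge0 : nonneg_vec v.
  case: (norm2_sign v2) => // /nonneg_ht_gt0; rewrite htN oppr_eq0 => /(_ (norm2_neq0 v2)).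
  by lia.
have [k vk] := nonzero_coord (norm2_neq0 v2); exists k; apply/eqP; rewrite -subr_eq0.
have pk : 0 < v k by move/forallP: v_ge0 => /(_ k); move: vk; lia.
apply: contraT => /(nonneg_ht_gt0 (nonneg_sub_alpha v_ge0 pk)).
by rewrite htB ht_alpha ht1 subrr.
Qed.

Lemma pos_root_coord (x : vec) k : nonneg_vec x -> ip x x = 2 -> x != alpha k ->
  exists2 m, m != k & 0 < x m.
Proof.
move=> x_ge0 x2 xk.
have /existsP [m /andP [mk xm]] : [exists m, (m != k) && (0 < x m)]; last by exists m.
apply: contraT => /existsPn x_on_k.
have xE : x = alpha k *~ x k.
  apply/ffunP => m; rewrite ffunMzE ffunE mulrzz; have [->|mk] := eqVneq m k.
    by rewrite mul1r.
  move/forallP: x_ge0 => /(_ m); move: (x_on_k m); rewrite mk /= mul0r -leNgt.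
  by move=> xm_le0 xm_ge0; apply/eqP; rewrite eq_le xm_le0 xm_ge0.
have xk1 : x k = 1.
  move: x2; rewrite {1 2}xE ipMzl ipMzr ip_alpha cartan_id.
  by move/forallP: x_ge0 => /(_ k); nia.
by rewrite xE xk1 mulr1z eqxx in xk.
Qed.

Lemma refl_nonneg (x : vec) k : nonneg_vec x -> ip x x = 2 -> x != alpha k ->
  nonneg_vec (refl k x).
Proof.
move=> x_ge0 x2 xk; have [m mk xm] := pos_root_coord x_ge0 x2 xk.
have [//|/forallP /(_ m)] := norm2_sign (etrans (ip_refl k x x) x2).
by rewrite !ffunE (negbTE mk) mulr0 subr0 oppr_ge0 leNgt xm.
Qed.

Lemma cartan_neq1 a b : cartan a b != 1.
Proof. by rewrite /Defs.cartan; case: (a == b); case: (adj a b). Qed.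

(** * Orthogonal sets of positive roots *)

Definition pos_of (v : vec) : vec := if nonneg_vec v then v else - v.

Lemma pos_of_nonneg v : ip v v = 2 -> nonneg_vec (pos_of v).
Proof. by rewrite /pos_of => /norm2_sign; case: ifP => // _ []. Qed.

Lemma pos_ofE v : nonneg_vec v -> pos_of v = v.
Proof. by rewrite /pos_of => ->. Qed.

Lemma pos_ofN v : ip v v = 2 -> pos_of (- v) = pos_of v.
Proof.
rewrite /pos_of => v2; have [v_ge0|v_lt0] := boolP (nonneg_vec v).
  case: ifP => [/(nonneg_and_nonpos v_ge0) v0|]; last by rewrite opprK.
  by rewrite v0 ip0l in v2.
by case: (norm2_sign v2) => [v_ge0|->]; first by rewrite v_ge0 in v_lt0.
Qed.

Lemma pos_of_pm v : pos_of v = v \/ pos_of v = - v.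
Proof. by rewrite /pos_of; case: ifP; [left|right]. Qed.

Lemma ip_pos_of v : ip (pos_of v) (pos_of v) = ip v v.
Proof. by case: (pos_of_pm v) => ->; rewrite ?ipNl ?ipNr ?opprK. Qed.

Lemma ip_pos_of_eq0 u v : ip u v = 0 -> ip (pos_of u) (pos_of v) = 0.
Proof.
move=> uv; case: (pos_of_pm u) => ->; case: (pos_of_pm v) => ->;
  by rewrite ?ipNl ?ipNr uv ?oppr0.
Qed.

Definition orth_roots (X : {fset vec}) := forall x, x \in X ->
  [/\ nonneg_vec x, ip x x = 2 & forall y, y \in X -> x != y -> ip x y = 0].

Lemma orth_pos_set_orth_roots X : orth_pos_set adj X -> orth_roots X.
Proof.
move=> [X_pos X_orth] x xX; have [[w [k xE]] x_ge0] := X_pos x xX.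
by split=> // [|y yX]; [rewrite xE ip_act ip_alpha cartan_id | exact: X_orth xX yX].
Qed.

Lemma ffun_opp (v : vec) : [ffun k => - v k] = - v.
Proof. by apply/ffunP => m; rewrite !ffunE. Qed.

Lemma wset_orth_roots w X : orth_roots X ->
  wset adj w X = [fset pos_of (act w x) | x in X].
Proof.
move=> X_orth; apply/fsetP => u; rewrite !inE; apply/idP/imfsetP.
  move=> /andP [/orP [] /imfsetP [x xX ->] u_ge0]; exists x => //; first by rewrite pos_ofE.
  have [_ x2 _] := X_orth x xX.
  by rewrite ffun_opp in u_ge0 *; rewrite -pos_ofN ?ip_act // pos_ofE.
move=> [x xX ->]; have [_ x2 _] := X_orth x xX.
rewrite pos_of_nonneg ?ip_act // andbT.
by case: (pos_of_pm (act w x)) => ->; apply/orP; [left | right]; apply/imfsetP; exists x.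
Qed.

Lemma orth_roots_wset w X : orth_roots X -> orth_roots (wset adj w X).
Proof.
move=> X_orth; rewrite wset_orth_roots // => _ /imfsetP [x xX ->].
have [_ x2 x_orth] := X_orth x xX.
split; [by rewrite pos_of_nonneg ?ip_act | by rewrite ip_pos_of ip_act |].
move=> _ /imfsetP [y yX ->] xy; apply: ip_pos_of_eq0; rewrite ip_act x_orth //.
by apply: contraNneq xy => ->.
Qed.

Lemma pos_of_act_pos_of w (v : vec) :
  ip v v = 2 -> pos_of (act w (pos_of v)) = pos_of (act w v).
Proof. by move=> v2; case: (pos_of_pm v) => -> //; rewrite raddfN pos_ofN ?ip_act. Qed.

Lemma wset_cat w1 w2 X : orth_roots X ->
  wset adj w1 (wset adj w2 X) = wset adj (w1 ++ w2) X.
Proof.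
move=> X_orth; have X2_orth := orth_roots_wset (w := w2) X_orth.
rewrite (wset_orth_roots _ X2_orth) !wset_orth_roots //.
apply/fsetP => y; apply/imfsetP/imfsetP => [[_ /imfsetP [x xX ->] ->]|[x xX ->]].
  by have [_ x2 _] := X_orth x xX; exists x; rewrite // pos_of_act_pos_of ?ip_act ?act_cat.
exists (pos_of (act w2 x)); first by apply/imfsetP; exists x.
by have [_ x2 _] := X_orth x xX; rewrite pos_of_act_pos_of ?ip_act ?act_cat.
Qed.

Lemma wset_ext w1 w2 X : orth_roots X -> act w1 =1 act w2 ->
  wset adj w1 X = wset adj w2 X.
Proof.
move=> X_orth w12; rewrite !wset_orth_roots //; apply/fsetP => y.
by apply/imfsetP/imfsetP => -[x xX ->]; exists x; rewrite ?w12.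
Qed.

Lemma wset_nil X : orth_roots X -> wset adj [::] X = X.
Proof.
move=> X_orth; rewrite wset_orth_roots //; apply/fsetP => y; apply/imfsetP/idP.
  by move=> [x xX ->] /=; have [x_ge0 _ _] := X_orth x xX; rewrite pos_ofE.
by move=> yX; exists y => //=; have [y_ge0 _ _] := X_orth y yX; rewrite pos_ofE.
Qed.

Local Notation r k X := (wset adj [:: k] X).

Lemma wset_cons k w X : orth_roots X -> wset adj (k :: w) X = r k (wset adj w X).
Proof. by move=> X_orth; rewrite wset_cat. Qed.

Lemma wset_cons2 k l X : orth_roots X -> wset adj [:: k; l] X = r k (r l X).
Proof. exact: wset_cons. Qed.

Lemma wset_cons3 k l m X : orth_roots X -> wset adj [:: k; l; m] X = r k (r l (r m X)).
Proof. by move=> X_orth; rewrite wset_cons ?wset_cons2. Qed.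

Lemma rK k X : orth_roots X -> r k (r k X) = X.
Proof.
move=> X_orth; rewrite wset_cat // -{2}(wset_nil X_orth).
by apply: wset_ext => // v /=; rewrite reflK.
Qed.

Lemma refl_comm i j (v : vec) : cartan i j = 0 -> refl i (refl j v) = refl j (refl i v).
Proof.
by move=> cij; apply/ffunP => m; rewrite !ffunE !ip_refll !ip_alpha (cartanC j i) cij; ring.
Qed.

Lemma refl_braid i j (v : vec) : cartan i j = -1 ->
  refl i (refl j (refl i v)) = refl j (refl i (refl j v)).
Proof.
move=> cij; apply/ffunP => m.
by rewrite !ffunE !ip_refll !ip_alpha !cartan_id (cartanC j i) cij; ring.
Qed.

Lemma r_comm i j X : orth_roots X -> cartan i j = 0 -> r i (r j X) = r j (r i X).
Proof.
by move=> X_orth cij; rewrite !wset_cat //; apply: wset_ext => // v /=; rewrite refl_comm.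
Qed.

Lemma r_braid i j X : orth_roots X -> cartan i j = -1 ->
  r i (r j (r i X)) = r j (r i (r j X)).
Proof.
move=> X_orth cij; rewrite !wset_cat //; try by apply: orth_roots_wset.
by apply: wset_ext => // v /=; rewrite refl_braid.
Qed.

Lemma r_fix k X : orth_roots X ->
  alpha k \in X \/ (forall x, x \in X -> ip x (alpha k) = 0) -> r k X = X.
Proof.
move=> X_orth X_k; have fixE x : x \in X -> pos_of (refl k x) = x.
  move=> xX; have [x_ge0 _ x_orth] := X_orth x xX; have [->|xk] := eqVneq x (alpha k).
    by rewrite refl_alpha pos_ofN ?ip_alpha ?cartan_id // pos_ofE // alpha_nonneg.
  by rewrite refl_id ?pos_ofE //; case: X_k => [/x_orth -> //|/(_ x xX)].
rewrite wset_orth_roots //; apply/fsetP => y; apply/imfsetP/idP => [[x xX ->]|yX].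
  by rewrite fixE.
by exists y; rewrite ?fixE.
Qed.

Lemma r_refl k X : orth_roots X -> alpha k \notin X -> r k X = [fset refl k x | x in X].
Proof.
move=> X_orth kX; rewrite wset_orth_roots //; apply/fsetP => y.
apply/imfsetP/imfsetP => -[x xX ->]; exists x => //=; have [x_ge0 x2 _] := X_orth x xX;
  by rewrite pos_ofE // refl_nonneg //; apply: contraNneq kX => <-.
Qed.

(** * The order on the orbit *)

Definition ht_count (X : {fset vec}) (h : int) : nat := #|` [fset x in X | ht x == h]|.

Definition ht_lex (X Y : {fset vec}) : Prop := exists h0,
  (forall h, h < h0 -> ht_count X h = ht_count Y h) /\ (ht_count Y h0 < ht_count X h0)%N.

(* At the least height [ht m] of an element of [X `\` Y] the sets agree
   below, and [X] has strictly more elements of that height than [Y]. *)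
Lemma prec_ht_lex X Y : prec X Y -> ht_lex X Y.
Proof.
move=> [_ [_ [b bXY b_min]]]; have [m mXY m_min] := fset_argmin (@ht n) bXY.
have := m_min b bXY; move: mXY; rewrite !inE => /andP [mY mX] mb.
exists (ht m); split.
  move=> h hm; congr (#|` _|); apply/fsetP => x; rewrite !inE.
  have [hx|] := eqVneq (ht x) h; rewrite ?andbF //= !andbT.
  apply/idP/idP => xin; apply/negPn/negP => xnotin.
    by have := m_min x; rewrite !inE xnotin xin => /(_ isT); lia.
  by have := b_min x; rewrite !inE xnotin xin => /(_ isT); lia.
apply: fproper_ltn_card; rewrite fproperE; apply/andP; split.
  apply/fsubsetP => x; rewrite !inE => /andP [xY /eqP hx]; rewrite hx eqxx andbT.
  by apply/negPn/negP => xX; have := b_min x; rewrite !inE xX xY => /(_ isT); lia.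
by apply/negP => /fsubsetP /(_ m); rewrite !inE eqxx mX andbT (negbTE mY) => /(_ isT).
Qed.

Lemma ht_lex_trans X Y Z : ht_lex X Y -> ht_lex Y Z -> ht_lex X Z.
Proof.
move=> [h1 [XY1 XY2]] [h2 [YZ1 YZ2]]; have [h12|h21|h12] := ltgtP h1 h2.
- exists h1; split=> [h hh|]; last by rewrite -YZ1.
  by rewrite XY1 ?YZ1 // (lt_trans hh h12).
- exists h2; split=> [h hh|]; last by rewrite XY1.
  by rewrite XY1 ?YZ1 // (lt_trans hh h21).
- exists h1; split=> [h hh|]; first by rewrite XY1 ?YZ1 // -h12.
  by rewrite -h12 in YZ2; apply: ltn_trans YZ2 XY2.
Qed.

Lemma ht_lex_irr X : ~ ht_lex X X.
Proof. by move=> [h [_]]; rewrite ltnn. Qed.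

Local Notation eps k x := (ip x (alpha k)).

Ltac ip_expand :=
  rewrite ?(ipBl, ipBr, ipDl, ipDr, ipNl, ipNr, ipMzl, ipMzr) ?opprK
    ?ip_alpha ?cartan_id ?(ipC (alpha _)).

Lemma eps_refl i j x : eps j (refl i x) = eps j x - eps i x * cartan i j.
Proof. by rewrite ip_refll ip_alpha. Qed.

Definition down k (X : {fset vec}) := alpha k \notin X /\ exists2 x, x \in X &
  eps k x != 0 /\ forall y, y \in X -> eps k y != 0 -> ht x - eps k x < ht y.

Definition up k (X : {fset vec}) := alpha k \notin X /\ exists2 y, y \in X &
  eps k y != 0 /\ forall x, x \in X -> eps k x != 0 -> ht y < ht x - eps k x.

Lemma refl_neq k x : eps k x != 0 -> refl k x != x.
Proof. by move=> ex; apply/eqP => /(congr1 (ip^~ (alpha k))) /=; rewrite ip_refl_alpha; lia. Qed.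

Section OrthRoots.
Variable X : {fset vec}.
Hypothesis X_orth : orth_roots X.

Lemma orth_nonneg x : x \in X -> nonneg_vec x.
Proof. by case/X_orth. Qed.

Lemma orth_norm x : x \in X -> ip x x = 2.
Proof. by case/X_orth. Qed.

Lemma orth_ip x y : x \in X -> y \in X -> x != y -> ip x y = 0.
Proof. by case/X_orth => _ _; apply. Qed.

Lemma orth_ht_gt0 x : x \in X -> 0 < ht x.
Proof. by move=> xX; rewrite nonneg_ht_gt0 ?orth_nonneg ?norm2_neq0 ?orth_norm. Qed.

Lemma orth_eps k x : alpha k \notin X -> x \in X -> -1 <= eps k x <= 1.
Proof.
move=> kX xX; rewrite pos_root_ip_alpha ?orth_nonneg ?orth_norm //.
by apply: contraNneq kX => <-.
Qed.

Lemma refl_notin k x : alpha k \notin X -> x \in X -> eps k x != 0 -> refl k x \notin X.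
Proof.
move=> kX xX ex; apply/negP => rxX; have := orth_ip rxX xX (refl_neq ex).
by rewrite ip_refll orth_norm // (ipC (alpha k)); have := orth_eps kX xX; move: ex; nia.
Qed.

Lemma refl_in_r k x : alpha k \notin X -> x \in X -> refl k x \in r k X.
Proof. by move=> kX xX; rewrite r_refl //; apply/imfsetP; exists x. Qed.

Lemma mem_r k y : alpha k \notin X -> y \in r k X -> exists2 x, x \in X & y = refl k x.
Proof. by move=> kX; rewrite r_refl // => /imfsetP. Qed.

Lemma notin_r k x : alpha k \notin X -> x \in X -> eps k x != 0 -> x \notin r k X.
Proof.
move=> kX xX ex; apply/negP => /(mem_r kX) [x' x'X xE].
have ex' : eps k x' != 0 by move: ex; rewrite xE ip_refl_alpha oppr_eq0.
by move: (refl_notin kX x'X ex'); rewrite -xE xX.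
Qed.

Lemma in_r k x : alpha k \notin X -> x \in X -> eps k x = 0 -> x \in r k X.
Proof. by move=> kX xX ex; rewrite -(refl_id ex) refl_in_r. Qed.

Lemma down_prec k : down k X -> prec (r k X) X.
Proof.
move=> [kX [x xX [ex x_min]]]; have xr := notin_r kX xX ex.
split; first by apply: contraNneq xr => ->.
split; first by apply/eqP => /fsetP /(_ x); rewrite !(in_fsetD, in_fset0) xr xX.
exists (refl k x); first by rewrite !(in_fsetD, in_fset0) refl_notin // refl_in_r.
move=> c; rewrite !(in_fsetD, in_fset0) => /andP [cr cX]; rewrite ht_refl; apply: x_min => //.
by apply: contraNneq cr => /(in_r kX cX).
Qed.

Lemma up_prec k : up k X -> prec X (r k X).
Proof.
move=> [kX [y yX [ey y_min]]]; have yr := notin_r kX yX ey.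
split; first by apply: contraNneq yr => <-.
split.
  apply/eqP => /fsetP /(_ (refl k y)).
  by rewrite !(in_fsetD, in_fset0) refl_notin // refl_in_r.
exists y; first by rewrite !(in_fsetD, in_fset0) yr.
move=> c; rewrite !(in_fsetD, in_fset0) => /andP [cX /(mem_r kX) [x xX cE]].
have ex : eps k x != 0 by apply: contraNneq cX => /refl_id; rewrite cE => ->.
by rewrite cE ht_refl; apply: y_min.
Qed.

(* Otherwise [y - refl k x] would be a root of height 0. *)
Lemma no_ht_step k x y : alpha k \notin X -> x \in X -> y \in X ->
  eps k x = 1 -> eps k y = -1 -> ht x != ht y + 1.
Proof.
move=> kX xX yX ex ey; have xy : x != y by apply: contra_eqN ey => /eqP <-; rewrite ex.
have xy0 := orth_ip xX yX xy.
have rxy : ip (refl k x) y = 1 by rewrite ip_refll xy0 ex (ipC (alpha k)) ey; lia.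
have v2 : ip (y - refl k x) (y - refl k x) = 2.
  by rewrite ipBl !ipBr ip_refl (ipC y) rxy !orth_norm //; lia.
by have := norm2_ht_neq0 v2; rewrite htB ht_refl ex; lia.
Qed.

(* The minimum of [3 * ht x - eps k x] selects the lowest [x] with
   [eps k x != 0], preferring [eps k x = 1]. *)
Lemma r_trichotomy k : r k X = X \/ down k X \/ up k X.
Proof.
have [kX|kX] := boolP (alpha k \in X); first by left; apply: r_fix; [|left].
have [S0|[x0 x0S]] := fset_0Vmem [fset x in X | eps k x != 0].
  left; apply: r_fix => //; right => x xX; apply/eqP; apply: contraT => ex.
  by move: S0 => /fsetP /(_ x); rewrite !inE xX ex.
right; have [x xS x_min] := fset_argmin (fun x => 3 * ht x - eps k x) x0S.
move: xS; rewrite !inE => /andP [xX ex]; have := orth_eps kX xX.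
have x_min' y : y \in X -> eps k y != 0 -> 3 * ht x - eps k x <= 3 * ht y - eps k y.
  by move=> yX ey; apply: x_min; rewrite !inE yX.
have [ex1|ex1] := eqVneq (eps k x) 1 => ex_bd.
  left; split=> //; exists x => //; split=> // y yX ey; have := x_min' y yX ey.
  by have := orth_eps kX yX; lia.
right; split=> //; exists x => //; split=> // y yX ey; have := x_min' y yX ey.
have := no_ht_step kX yX xX; have := orth_eps kX yX; move: ex ex1; lia.
Qed.

(** * Two nodes *)

Lemma comm_alpha_in_r i j : cartan i j = 0 -> alpha i \notin X ->
  (alpha j \in r i X) = (alpha j \in X).
Proof.
move=> cij iX; have rj : refl i (alpha j) = alpha j by rewrite refl_id // ip_alpha cartanC.
apply/idP/idP => [/(mem_r iX) [x xX xE]|jX]; last by rewrite -rj refl_in_r.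
by move: xX; rewrite -(reflK i x) -xE rj.
Qed.

(* With [s = eps i x] and [t = eps j x], the norm of the left-hand side is
   [4 - 2 s^2 - 2 t^2 = 0]. *)
Lemma comm_pair_diff i j x y : cartan i j = 0 -> x \in X -> y \in X ->
  eps i y = - eps i x -> eps j y = - eps j x ->
  eps i x * eps i x = 1 -> eps j x * eps j x = 1 ->
  x - y - alpha i *~ eps i x - alpha j *~ eps j x = 0.
Proof.
move=> cij xX yX eyi eyj; set s := eps i x in eyi *; set t := eps j x in eyj * => ss tt.
have xy : x != y by apply/eqP => xyE; move: eyi; rewrite -xyE; nia.
apply: ip_eq0; ip_expand; rewrite -/s -/t eyi eyj !orth_norm // (ipC y).
by rewrite (orth_ip xX yX xy) (cartanC j i) cij; nia.
Qed.

Lemma comm_pair_ip i j x y a : cartan i j = 0 -> x \in X -> y \in X -> a \in X ->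
  a != x -> a != y -> eps i y = - eps i x -> eps j y = - eps j x ->
  eps i x * eps i x = 1 -> eps j x * eps j x = 1 ->
  eps i x * eps i a + eps j x * eps j a = 0.
Proof.
move=> cij xX yX aX ax ay eyi eyj ss tt.
have := congr1 (ip a) (comm_pair_diff cij xX yX eyi eyj ss tt); ip_expand.
by rewrite (orth_ip aX xX ax) (orth_ip aX yX ay) (ipC a 0) ip0l; nia.
Qed.

Lemma down_comm i j : cartan i j = 0 -> down i X -> down j (r i X) -> down j X.
Proof.
move=> cij [iX [a aX [ea a_min]]] [jY [_ /(mem_r iX) [x xX ->] [ex x_min]]].
have eps_j t : eps j (refl i t) = eps j t by rewrite eps_refl cij mulr0 subr0.
have jX : alpha j \notin X by rewrite -(comm_alpha_in_r cij iX).
rewrite eps_j in ex.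
have x_min' t : t \in X -> eps j t != 0 -> ht x - eps i x - eps j x < ht t - eps i t.
  by move=> tX et; have := x_min _ (refl_in_r iX tX); rewrite !eps_j !ht_refl; apply.
have [rX|[//|[_ [y yX [ey y_min]]]]] := r_trichotomy j.
  by have := notin_r jX xX ex; rewrite rX xX.
have bix := orth_eps iX xX; have biy := orth_eps iX yX.
have bjx := orth_eps jX xX; have bjy := orth_eps jX yX.
have xx := x_min' x xX ex; have yy := y_min y yX ey.
have xy := x_min' y yX ey; have yx := y_min x xX ex.
have exj : eps j x = 1 by lia.
have eyj : eps j y = -1 by lia.
have exi : eps i x = 1 by lia.
have eyi : eps i y = -1 by lia.
have ay : ht a - eps i a < ht y by apply: a_min; rewrite ?eyi.
have aa := a_min a aX ea; have bia := orth_eps iX aX.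
have eai : eps i a = 1 by lia.
have ax : a != x by apply: contraTneq ay => ->; lia.
have ay' : a != y by apply: contra_eqN eai => /eqP ->; rewrite eyi.
have := comm_pair_ip cij xX yX aX ax ay'; rewrite exi exj eyi eyj eai.
by move=> /(_ erefl erefl erefl erefl); have := x_min' a aX; lia.
Qed.

Lemma up_comm i j : cartan i j = 0 -> up i X -> up j (r i X) -> up j X.
Proof.
move=> cij [iX [z zX [ez z_min]]] [jY [_ /(mem_r iX) [y yX ->] [ey y_min]]].
have eps_j t : eps j (refl i t) = eps j t by rewrite eps_refl cij mulr0 subr0.
have jX : alpha j \notin X by rewrite -(comm_alpha_in_r cij iX).
rewrite eps_j in ey.
have y_min' t : t \in X -> eps j t != 0 -> ht y - eps i y < ht t - eps i t - eps j t.
  by move=> tX et; have := y_min _ (refl_in_r iX tX); rewrite !eps_j !ht_refl; apply.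
have [rX|[[_ [x xX [ex x_min]]]|//]] := r_trichotomy j.
  by have := notin_r jX yX ey; rewrite rX yX.
have bix := orth_eps iX xX; have biy := orth_eps iX yX.
have bjx := orth_eps jX xX; have bjy := orth_eps jX yX.
have xx := x_min x xX ex; have yy := y_min' y yX ey.
have xy := x_min y yX ey; have yx := y_min' x xX ex.
have exj : eps j x = 1 by lia.
have eyj : eps j y = -1 by lia.
have exi : eps i x = -1 by lia.
have eyi : eps i y = 1 by lia.
have zy : ht z < ht y - eps i y by apply: z_min; rewrite ?eyi.
have zx : ht z < ht x - eps i x by apply: z_min; rewrite ?exi.
have zz := z_min z zX ez; have biz := orth_eps iX zX.
have ezi : eps i z = -1 by lia.
have zy' : z != y by apply: contra_eqN ezi => /eqP ->; rewrite eyi.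
have zx' : z != x by apply: contraTneq zy => ->; lia.
have := comm_pair_ip cij yX xX zX zy' zx'; rewrite exi exj eyi eyj ezi.
by move=> /(_ erefl erefl erefl erefl); have := x_min z zX; lia.
Qed.

(* Otherwise [x - w - alpha j] would be a root with inner product 2 with
   [alpha i], i.e. [alpha i] itself, but it is orthogonal to [alpha j]. *)
Lemma braid_eps_le i j x w : cartan i j = -1 -> x \in X -> w \in X ->
  eps j x = 1 -> eps j w = -1 -> eps i x <= eps i w.
Proof.
move=> cij xX wX ex ew; have xw : x != w by apply: contra_eqN ew => /eqP <-; rewrite ex.
rewrite leNgt; apply/negP => lt_wx.
have v2 : ip (x - w - alpha j) (x - w - alpha j) = 2.
  by ip_expand; rewrite ex ew !orth_norm // (ipC w) orth_ip //; lia.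
have vi : ip (x - w - alpha j) (alpha i) = 2.
  by have := norm2_ip_alpha i v2; ip_expand; rewrite (cartanC j i) cij; lia.
have := congr1 (ip^~ (alpha j)) (norm2_ip_alpha_eq2 v2 vi) => /=.
by ip_expand; rewrite ex ew cij; lia.
Qed.

(* Otherwise [x - z - alpha i] would be a simple root [alpha t] with
   [cartan t j = 1]. *)
Lemma braid_ht_neq i j x z : cartan i j = -1 -> x \in X -> z \in X ->
  eps i x = 1 -> eps i z = -1 -> eps j x = eps j z -> ht z != ht x - 2.
Proof.
move=> cij xX zX ex ez exz; apply/eqP => hz.
have xz : x != z by apply: contra_eqN ez => /eqP <-; rewrite ex.
have v2 : ip (x - z - alpha i) (x - z - alpha i) = 2.
  by ip_expand; rewrite ex ez !orth_norm // (ipC z) orth_ip //; lia.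
have [t vt] : exists t, x - z - alpha i = alpha t.
  by apply: norm2_ht1 v2 _; rewrite !htB ht_alpha hz; ring.
have := cartan_neq1 t j; rewrite -ip_alpha -vt; ip_expand.
by rewrite exz cij; lia.
Qed.

Lemma up_adj_alpha_notin_r i j : cartan i j = -1 -> up i X -> alpha j \notin r i X.
Proof.
move=> cij [iX [z zX [ez z_min]]]; apply/negP => /(mem_r iX) [x xX jE].
have ex : eps i x = 1 by rewrite -[x](reflK i) -jE ip_refl_alpha ip_alpha cartanC cij.
have := z_min x xX; rewrite ex -(reflK i x) ht_refl -jE ht_alpha ip_alpha.
by rewrite cartanC cij => /(_ isT); have := orth_ht_gt0 zX; lia.
Qed.

End OrthRoots.

Section Braid.
Variables (X : {fset vec}) (i j : 'I_n).
Hypotheses (X_orth : orth_roots X) (cij : cartan i j = -1).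

Let cji : cartan j i = -1. Proof. by rewrite cartanC. Qed.
Let Y_orth : orth_roots (r i X). Proof. exact: orth_roots_wset. Qed.
Let V_orth : orth_roots (r j (r i X)). Proof. exact: orth_roots_wset. Qed.

Lemma eps_refl_adj t : eps j (refl i t) = eps j t + eps i t.
Proof. by rewrite eps_refl cij; ring. Qed.

Lemma eps_refl2 t : eps i (refl j (refl i t)) = eps j t.
Proof. by rewrite eps_refl ip_refl_alpha eps_refl_adj cji; ring. Qed.

Lemma ht_refl2 t : ht (refl j (refl i t)) = ht t - 2 * eps i t - eps j t.
Proof. by rewrite !ht_refl eps_refl_adj; ring. Qed.

Lemma refl2_in_r t : alpha i \notin X -> alpha j \notin r i X -> t \in X ->
  refl j (refl i t) \in r j (r i X).
Proof. by move=> iX jY tX; rewrite (refl_in_r Y_orth) ?(refl_in_r X_orth). Qed.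

Lemma up_braid2 : up i X -> up j X -> up i (r j (r i X)).
Proof.
move=> upi [jX [w wX [ew w_min]]]; have jY := up_adj_alpha_notin_r X_orth cij upi.
have [iX _] := upi; have in_V t := @refl2_in_r t iX jY.
have iV : alpha i \notin r j (r i X).
  apply/negP => /(mem_r Y_orth jY) [y /(mem_r X_orth iX) [t tX ->] iE].
  by have := orth_eps X_orth jX tX; rewrite -eps_refl2 -iE ip_alpha cartan_id; lia.
have [rV|[[_ [_ /(mem_r Y_orth jY) [y /(mem_r X_orth iX) [x xX ->] ->]]]|//]] :=
  r_trichotomy V_orth i.
  by have := notin_r V_orth iV (in_V w wX); rewrite eps_refl2 rV in_V // => /(_ ew).
rewrite eps_refl2 => -[ex x_min].
have x_min' t : t \in X -> eps j t != 0 ->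
    ht x - 2 * eps i x - eps j x - eps j x < ht t - 2 * eps i t - eps j t.
  by move=> tX et; have := x_min _ (in_V t tX); rewrite !eps_refl2 !ht_refl2; apply.
have bjx := orth_eps X_orth jX xX; have xx := x_min' x xX ex.
have exj : eps j x = 1 by lia.
have bjw := orth_eps X_orth jX wX; have ww := w_min w wX ew.
have ewj : eps j w = -1 by lia.
have le_xw := braid_eps_le X_orth cij xX wX exj ewj.
have xw := x_min' w wX ew; have wx := w_min x xX ex; have eij : eps i x = eps i w by lia.
by have := braid_ht_neq X_orth cji xX wX exj ewj eij; lia.
Qed.

Lemma up_of_braid2 :
  alpha i \notin X -> alpha j \notin r i X -> up i (r j (r i X)) -> up j X.
Proof.
move=> iX jY [iV [_ /(mem_r Y_orth jY) [y /(mem_r X_orth iX) [u uX ->] ->] [eu u_min]]].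
have in_V t := @refl2_in_r t iX jY; rewrite eps_refl2 in eu.
have u_min' t : t \in X -> eps j t != 0 ->
    ht u - 2 * eps i u - eps j u < ht t - 2 * eps i t - eps j t - eps j t.
  by move=> tX et; have := u_min _ (in_V t tX); rewrite !eps_refl2 !ht_refl2; apply.
have jX : alpha j \notin X.
  apply: contra iV => /in_V; set a := refl j _.
  have a2 : ip a a = 2 by rewrite !ip_refl ip_alpha cartan_id.
  have ai : eps i a = 2 by rewrite eps_refl2 ip_alpha cartan_id.
  by rewrite (norm2_ip_alpha_eq2 a2 ai).
have [rX|[[_ [x xX [ex x_min]]]|//]] := r_trichotomy X_orth j.
  by have := notin_r X_orth jX uX eu; rewrite rX uX.
have bju := orth_eps X_orth jX uX; have uu := u_min' u uX eu.
have euj : eps j u = -1 by lia.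
have bjx := orth_eps X_orth jX xX; have xx := x_min x xX ex.
have exj : eps j x = 1 by lia.
have biu := orth_eps X_orth iX uX; have bix := orth_eps X_orth iX xX.
have ux := u_min' x xX ex; have xu := x_min u uX eu.
have [eui exi hux] : [/\ eps i u = 1, eps i x = -1 & ht u = ht x] by split; lia.
have ux' : u != x by apply: contra_eqN exi => /eqP <-; rewrite eui.
have v2 : ip (u - x - alpha i + alpha j) (u - x - alpha i + alpha j) = 2.
  ip_expand; rewrite euj exj eui exi !(orth_norm X_orth) // (ipC x).
  by rewrite (orth_ip X_orth uX xX ux') cij; lia.
by have := norm2_ht_neq0 v2; rewrite htD !htB !ht_alpha hux; lia.
Qed.

Lemma up_braid : up i X -> up j X -> up j (r i X).
Proof.
move=> upi [jX [w wX [ew w_min]]]; have jY := up_adj_alpha_notin_r X_orth cij upi.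
have [iX [z zX [ez z_min]]] := upi.
have bi t : t \in X -> -1 <= eps i t <= 1 by apply: orth_eps.
have bj t : t \in X -> -1 <= eps j t <= 1 by apply: orth_eps.
have bij t : t \in X -> -1 <= eps j t + eps i t <= 1.
  by move=> tX; rewrite -eps_refl_adj (orth_eps Y_orth jY) ?(refl_in_r X_orth).
have ezi : eps i z = -1 by have := z_min z zX ez; have := bi z zX; lia.
have ewj : eps j w = -1 by have := w_min w wX ew; have := bj w wX; lia.
have z_min' t : t \in X -> eps i t = 0 \/ ht z < ht t - eps i t.
  by move=> tX; have [|/(z_min t tX)] := eqVneq (eps i t) 0; [left | right].
have w_min' t : t \in X -> eps j t = 0 \/ ht w < ht t - eps j t.
  by move=> tX; have [|/(w_min t tX)] := eqVneq (eps j t) 0; [left | right].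
have [rY|[[_ [_ /(mem_r X_orth iX) [x xX ->] [ex x_min]]]|//]] := r_trichotomy Y_orth j.
  have fix0 t : t \in X -> eps j t + eps i t = 0.
    move=> tX; apply/eqP; apply: contraT => et.
    have := notin_r Y_orth jY (refl_in_r X_orth iX tX); rewrite eps_refl_adj rY.
    by rewrite (refl_in_r X_orth iX tX) => /(_ et).
  by move: (fix0 w wX) (fix0 z zX) (z_min' w wX) (w_min' z zX); lia.
rewrite eps_refl_adj in ex.
have x_min' t : t \in X -> eps j t + eps i t = 0 \/
    ht x - eps i x - (eps j x + eps i x) < ht t - eps i t.
  move=> tX; have [|et] := eqVneq (eps j t + eps i t) 0; [by left | right].
  by have := x_min _ (refl_in_r X_orth iX tX); rewrite !eps_refl_adj !ht_refl; apply.
have bix := bi x xX; have bjx := bj x xX; have bijx := bij x xX; have xx := x_min' x xX.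
have exij : eps j x + eps i x = 1 by lia.
have biw := bi w wX; have bjz := bj z zX; have bijw := bij w wX; have bijz := bij z zX.
have zw := z_min' w wX; have wz := w_min' z zX; have xw := x_min' w wX; have xz := x_min' z zX.
have [exi|exi] : eps i x = 0 \/ eps i x = 1 by lia.
  have exj : eps j x = 1 by lia.
  have le_xw := braid_eps_le X_orth cij xX wX exj ewj; have wx := w_min' x xX.
  by lia.
have exj : eps j x = 0 by lia.
have le_xz := braid_eps_le X_orth cji xX zX exi ezi; have zx := z_min' x xX.
have [ezj|ezj] := eqVneq (eps j z) 0; last by lia.
by have := braid_ht_neq X_orth cij xX zX exi ezi (etrans exj (esym ezj)); lia.
Qed.

End Braid.

(** * The monoidal poset *)

Section Orbit.
Variable Bs : {fset vec} -> Prop.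
Hypothesis Bs_orbit : is_orbit adj Bs.
Local Notation lt := (mlt adj Bs).

Lemma Bs_orth X : Bs X -> orth_roots X.
Proof.
case: Bs_orbit => B0 /orth_pos_set_orth_roots B0_orth BsE /BsE [w ->].
exact: orth_roots_wset.
Qed.

Lemma Bs_r k X : Bs X -> Bs (r k X).
Proof.
case: Bs_orbit => B0 /orth_pos_set_orth_roots B0_orth BsE /BsE [w ->].
by apply/BsE; exists (k :: w); rewrite wset_cat.
Qed.

Lemma mlt_trans X Y Z : lt X Y -> lt Y Z -> lt X Z.
Proof. exact: t_trans. Qed.

Lemma mlt_ht_lex X Y : lt X Y -> ht_lex X Y.
Proof. by elim=> [x y [_ [k [_ /prec_ht_lex]]] // | x y z _ + _]; apply: ht_lex_trans. Qed.

Lemma mlt_irr X : ~ lt X X.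
Proof. by move/mlt_ht_lex/ht_lex_irr. Qed.

Lemma mlt_up k X : Bs X -> up k X -> lt X (r k X).
Proof. by move=> BX /(up_prec (Bs_orth BX)) ?; apply: t_step; split=> //; exists k. Qed.

Lemma mlt_down k X : Bs X -> down k X -> lt (r k X) X.
Proof.
move=> BX /(down_prec (Bs_orth BX)) prec_rX; apply: t_step; split; first exact: Bs_r.
by exists k; rewrite rK; [split | exact: Bs_orth].
Qed.

Lemma up_mlt k X : Bs X -> lt X (r k X) -> up k X.
Proof.
move=> BX ltX; have [rX|[dn|//]] := r_trichotomy (Bs_orth BX) k.
  by move: ltX; rewrite rX => /mlt_irr.
by case: (mlt_irr (mlt_trans ltX (mlt_down BX dn))).
Qed.

Lemma down_mlt k X : Bs X -> lt (r k X) X -> down k X.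
Proof.
move=> BX ltX; have [rX|[//|u]] := r_trichotomy (Bs_orth BX) k.
  by move: ltX; rewrite rX => /mlt_irr.
by case: (mlt_irr (mlt_trans (mlt_up BX u) ltX)).
Qed.

Lemma mlt_r_refl_cmp B i : Bs B -> ~ in_perp adj B (alpha i) -> alpha i \notin B ->
  lt (r i B) B \/ lt B (r i B).
Proof.
move=> BB nperp iB; have B_orth := Bs_orth BB.
have [rB|[/(mlt_down BB)|/(mlt_up BB)]] := r_trichotomy B_orth i; [|by left|by right].
have [b bB eb] : exists2 b, b \in B & eps i b != 0.
  have [/existsP [[b bB] /= eb]|/existsPn b_perp] :=
    boolP [exists b : B, eps i (val b) != 0]; first by exists b.
  case: nperp; split=> [|b bB]; first by exists [::], i.
  by have /negPn/eqP := b_perp [` bB]; rewrite ipC.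
by have := notin_r B_orth iB bB eb; rewrite rB bB.
Qed.

Lemma mlt_r_comm_down B i j : Bs B -> ~~ adj i j ->
  lt (r i (r j B)) (r i B) -> lt (r i B) B -> lt (r i (r j B)) (r j B) /\ lt (r j B) B.
Proof.
move=> BB nij lt_ji_i lt_i; have B_orth := Bs_orth BB.
have [eij|ij] := eqVneq i j.
  by move: lt_ji_i; rewrite -eij rK // => lt_i'; case: (mlt_irr (mlt_trans lt_i lt_i')).
have cij := cartan_nadj ij nij; have cji : cartan j i = 0 by rewrite cartanC.
have BiB := Bs_r i BB; have BjB := Bs_r j BB; have BjiB := Bs_r j BiB.
rewrite r_comm // in lt_ji_i *.
have dn_i := down_mlt BB lt_i; have dn_j := down_mlt BiB lt_ji_i.
split; last exact: mlt_down BB (down_comm B_orth cij dn_i dn_j).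
have up_j : up j (r j (r i B)) by apply: up_mlt; rewrite ?(rK _ (Bs_orth BiB)).
have up_i : up i (r j (r j (r i B))).
  by rewrite (rK _ (Bs_orth BiB)); apply: up_mlt; rewrite ?(rK _ B_orth).
have := mlt_up BjiB (up_comm (Bs_orth BjiB) cji up_j up_i).
by rewrite -(r_comm _ cij) ?(rK _ (Bs_orth BjB)).
Qed.

Hypothesis Bs_adm : forall B, Bs B -> forall i j : 'I_n, ~~ adj i j ->
  forall g, g \in B -> [ffun k => g k - alpha i k + alpha j k] \in B ->
  wset adj [:: i] B = wset adj [:: j] B.

(* If [r_j] lowered [r_i X] again, two elements of [X] would differ by
   [alpha i + alpha j], and admissibility would force [r_i X = r_j X]. *)
Lemma up_comm_adm X i j : Bs X -> ~~ adj i j -> i != j -> up i X -> up j X ->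
  r i X != r j X -> up j (r i X).
Proof.
move=> BX nij ij [iX _] [jX [w wX [ew w_min]]] rij.
have X_orth := Bs_orth BX; have Y_orth := Bs_orth (Bs_r i BX).
have cij := cartan_nadj ij nij.
have eps_j t : eps j (refl i t) = eps j t by rewrite eps_refl cij mulr0 subr0.
have jY : alpha j \notin r i X by rewrite comm_alpha_in_r.
have [rY|[[_ [_ /(mem_r X_orth iX) [x xX ->] [ex x_min]]]|//]] := r_trichotomy Y_orth j.
  have := notin_r Y_orth jY (refl_in_r X_orth iX wX); rewrite eps_j rY.
  by rewrite (refl_in_r X_orth iX wX) => /(_ ew).
rewrite eps_j in ex; case/eqP: rij.
have x_min' t : t \in X -> eps j t != 0 -> ht x - eps i x - eps j x < ht t - eps i t.
  move=> tX et; have := x_min _ (refl_in_r X_orth iX tX).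
  by rewrite !eps_j !ht_refl; apply.
have bix := orth_eps X_orth iX xX; have biw := orth_eps X_orth iX wX.
have bjx := orth_eps X_orth jX xX; have bjw := orth_eps X_orth jX wX.
have xx := x_min' x xX ex; have ww := w_min w wX ew.
have xw := x_min' w wX ew; have wx := w_min x xX ex.
have exj : eps j x = 1 by lia.
have ewj : eps j w = -1 by lia.
have exi : eps i x = 1 by lia.
have ewi : eps i w = -1 by lia.
have := comm_pair_diff X_orth cij xX wX; rewrite exi exj ewi ewj !mulr1z.
move=> /(_ erefl erefl erefl erefl) /eqP; rewrite !subr_eq add0r => /eqP xE.
have gE : [ffun k => refl i w k - alpha i k + alpha j k] = refl i x.
  apply/ffunP => k; rewrite !reflE ewi exi xE !(ffunE, ffunMzE).
  by rewrite !mulrzz; ring.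
have := Bs_adm (Bs_r i BX) nij (refl_in_r X_orth iX wX); rewrite gE.
move=> /(_ (refl_in_r X_orth iX xX)); rewrite (rK _ X_orth) => XE.
by rewrite {2}XE (rK _ Y_orth).
Qed.

Lemma mlt_r_comm_up B i j : Bs B -> ~~ adj i j -> lt B (r i B) -> lt B (r j B) ->
  r i B <> r j B -> lt (r i B) (r i (r j B)) /\ lt (r j B) (r i (r j B)).
Proof.
move=> BB nij lt_i lt_j rij; have [eij|ij] := eqVneq i j; first by case: rij; rewrite eij.
have up_i := up_mlt BB lt_i; have up_j := up_mlt BB lt_j.
have nji : ~~ adj j i by rewrite adj_sym.
have rij' : r i B != r j B by apply/eqP.
have rji : r j B != r i B by rewrite eq_sym.
have ji : j != i by rewrite eq_sym.
split; last exact: mlt_up (Bs_r j BB) (up_comm_adm BB nji ji up_j up_i rji).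
rewrite (r_comm (Bs_orth BB) (cartan_nadj ij nij)).
exact: mlt_up (Bs_r i BB) (up_comm_adm BB nij ij up_i up_j rij').
Qed.

Lemma mlt_r_braid_up B i j : Bs B -> adj i j -> lt B (r i B) -> lt B (r j B) ->
  (lt (r i B) (r j (r i B)) /\ lt (r j (r i B)) (r i (r j (r i B)))) /\
  (lt (r j B) (r i (r j B)) /\ lt (r i (r j B)) (r j (r i (r j B)))).
Proof.
move=> BB aij lt_i lt_j; have B_orth := Bs_orth BB.
have cij := cartan_adj aij; have cji : cartan j i = -1 by rewrite cartanC.
have up_i := up_mlt BB lt_i; have up_j := up_mlt BB lt_j.
split; split.
- exact: mlt_up (Bs_r i BB) (up_braid B_orth cij up_i up_j).
- exact: mlt_up (Bs_r j (Bs_r i BB)) (up_braid2 B_orth cij up_i up_j).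
- exact: mlt_up (Bs_r j BB) (up_braid B_orth cji up_j up_i).
- exact: mlt_up (Bs_r i (Bs_r j BB)) (up_braid2 B_orth cji up_j up_i).
Qed.

(* Everything is read off from the bottom element [r j r i r j B], where
   [up_of_braid2] provides the missing ascent along [j]. *)
Lemma mlt_r_braid_down B i j : Bs B -> adj i j ->
  lt (r j (r i (r j B))) (r j (r i B)) -> lt (r j (r i B)) (r i B) -> lt (r i B) B ->
  lt (r j (r i (r j B))) (r i (r j B)) /\ lt (r i (r j B)) (r j B) /\ lt (r j B) B.
Proof.
move=> BB aij lt1 lt2 lt3; have B_orth := Bs_orth BB.
have cij := cartan_adj aij; have cji : cartan j i = -1 by rewrite cartanC.
have oi := Bs_orth (Bs_r i BB); have oj := Bs_orth (Bs_r j BB).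
have oji := Bs_orth (Bs_r j (Bs_r i BB)); have oij := Bs_orth (Bs_r i (Bs_r j BB)).
set V := r j (r i (r j B)); have BV : Bs V by do 3!apply: Bs_r.
have V_orth := Bs_orth BV.
have rV : r i V = r j (r i B) by rewrite /V -(r_braid B_orth cij) (rK _ oji).
have iV : r j (r i V) = r i B by rewrite rV (rK _ oi).
have rjV : r j V = r i (r j B) by rewrite /V (rK _ oij).
have up_i : up i V by apply: up_mlt; rewrite ?rV.
have up_j1 : up j (r i V) by apply: up_mlt; [apply: Bs_r | rewrite iV rV].
have up_i2 : up i (r j (r i V)).
  by apply: up_mlt; [do 2!apply: Bs_r | rewrite iV (rK _ B_orth)].
have up_j : up j V by apply: (up_of_braid2 V_orth cij) up_i2; [case: up_i | case: up_j1].
split; first by rewrite -rjV; apply: mlt_up.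
split.
  have := mlt_up (Bs_r j BV) (up_braid V_orth cji up_j up_i).
  by rewrite rjV (rK _ oj).
have := mlt_up (Bs_r i (Bs_r j BV)) (up_braid2 V_orth cji up_j up_i).
by rewrite rjV (rK _ oj) (rK _ B_orth).
Qed.

End Orbit.

End RootLattice.

Theorem lemma3p4 (n : nat) (adj : rel 'I_n) (Bs : {fset {ffun 'I_n -> int}} -> Prop)
  (B : {fset {ffun 'I_n -> int}}) (i j : 'I_n) :
  coxeter_diagram adj -> spherical adj -> admissible adj Bs -> Bs B ->
  let r w := wset adj w B in
  let lt := mlt adj Bs in
  (~~ adj i j -> lt (r [:: i; j]) (r [:: i]) -> lt (r [:: i]) B ->
     lt (r [:: i; j]) (r [:: j]) /\ lt (r [:: j]) B) /\
  (~~ adj i j -> lt B (r [:: i]) -> lt B (r [:: j]) -> r [:: i] <> r [:: j] ->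
     lt (r [:: i]) (r [:: i; j]) /\ lt (r [:: j]) (r [:: i; j])) /\
  (adj i j -> lt B (r [:: i]) -> lt B (r [:: j]) ->
     (lt (r [:: i]) (r [:: j; i]) /\ lt (r [:: j; i]) (r [:: i; j; i])) /\
     (lt (r [:: j]) (r [:: i; j]) /\ lt (r [:: i; j]) (r [:: j; i; j]))) /\
  (adj i j -> lt (r [:: j; i; j]) (r [:: j; i]) -> lt (r [:: j; i]) (r [:: i]) ->
     lt (r [:: i]) B ->
     lt (r [:: j; i; j]) (r [:: i; j]) /\ lt (r [:: i; j]) (r [:: j]) /\ lt (r [:: j]) B) /\
  (~ in_perp adj B (alpha i) -> alpha i \notin B -> lt (r [:: i]) B \/ lt B (r [:: i])).
Proof.
move=> [adj_sym adj_irr] adj_spherical [Bs_orbit Bs_adm] BB r lt; rewrite {}/r {}/lt.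
have B_orth : orth_roots adj B by move: BB; apply: Bs_orth.
rewrite !wset_cons3 // !wset_cons2 //.
split; first by apply: mlt_r_comm_down.
split; first by apply: mlt_r_comm_up.
split; first by apply: mlt_r_braid_up.
by split; [apply: mlt_r_braid_down | apply: mlt_r_refl_cmp].
Qed.
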